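(* Let $H$ be a graph with at least one edge, and let $m \leq e(H)$ be a positive integer. Then there exists a spanning subgraph $H' \subseteq H$ with exactly $m$ edges satisfying: (S1) $\Delta(H') - \delta(H') \leq \Delta(H) - \delta(H) + 2$; (S2) $\Delta(H \setminus H') \leq (\Delta(H) + 1)\frac{e(H) - m}{e(H)} + 1$.
   Context: $e(H)$ is the number of edges, $\Delta(\cdot)$ and $\delta(\cdot)$ denote maximum and minimum degree. A spanning subgraph has the same vertex set as $H$. $H\setminus H'$ denotes the spanning subgraph of $H$ with edge set $E(H)\setminus E(H')$. *)

From mathcomp Require Import all_boot all_order all_algebra.
Set Implicit Arguments. Unset Strict Implicit. Unset Printing Implicit Defensive.

(* A finite simple graph on vertex set T is given by its edge set
   E : {set {set T}}, every edge being a 2-element subset of T. *)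
Definition simple_graph (T : finType) (E : {set {set T}}) : bool :=
  [forall e in E, #|e| == 2].

Definition nedges (T : finType) (E : {set {set T}}) : nat := #|E|.

Definition deg (T : finType) (E : {set {set T}}) (v : T) : nat :=
  #|[set e in E | v \in e]|.

Definition maxdeg (T : finType) (E : {set {set T}}) : nat :=
  \max_(v : T) deg E v.

(* minimum degree delta; #|T| is a neutral upper bound since every degree
   is < #|T| (it is only the value of the empty minimum) *)
Definition mindeg (T : finType) (E : {set {set T}}) : nat :=
  \big[minn/#|T|]_(v : T) deg E v.

From mathcomp Require Import all_boot all_order all_algebra.
From mathcomp Require Import zify.
Import Order.TTheory GRing.Theory Num.Theory.
Set Implicit Arguments. Unset Strict Implicit.

(* By Vizing's theorem the edges of H can be properly coloured with Delta + 1
   colours. Order the colour classes by decreasing size and let R consist of the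
   j largest classes and part of the next one, with |R| = e(H) - m; take
   H' = H \ R. Every vertex meets at most j + 1 edges of R and at most
   Delta + 1 - j edges of H', which gives (S1). Since the j largest classes
   carry at least a j / (Delta + 1) share of the edges,
   j <= (Delta + 1) (e(H) - m) / e(H), which gives (S2). *)

Section EdgeColoring.

Variable T : finType.
Implicit Types (F G : {set {set T}}) (e : {set T}) (col : {set T} -> nat).

Definition proper_coloring F col :=
  forall e1 e2, e1 \in F -> e2 \in F -> e1 != e2 ->
    forall v, v \in e1 -> v \in e2 -> col e1 != col e2.

Definition missing F col v a := forall e, e \in F -> v \in e -> col e != a.

Definition missingb F col v a := [forall e in F, (v \in e) ==> (col e != a)].

Definition colorable F n :=
  exists2 col, proper_coloring F col & forall e, e \in F -> col e < n.

Lemma missingP F col v a : reflect (missing F col v a) (missingb F col v a).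
Proof.
apply: (iffP forall_inP) => h e eF; first by move=> ve; move: (h e eF); rewrite ve.
by apply/implyP; apply: h.
Qed.

Lemma edge_card2 F e : simple_graph F -> e \in F -> #|e| = 2.
Proof. by move=> /forall_inP sF /sF /eqP. Qed.

Lemma simple_graphS F G : G \subset F -> simple_graph F -> simple_graph G.
Proof. by move=> GF /forall_inP sF; apply/forall_inP => e /(subsetP GF) /sF. Qed.

Lemma card2_memE e u : #|e| = 2 -> u \in e -> exists2 w, u != w & e = [set u; w].
Proof.
move=> /eqP /cards2P [a [b [ab ->]]]; rewrite in_set2 => /orP [] /eqP ->.
  by exists b.
by exists a; [rewrite eq_sym | rewrite setUC].
Qed.

Lemma set2_injr (u w w' : T) : u != w -> [set u; w] = [set u; w'] -> w = w'.
Proof.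
move=> uw E; have : w \in [set u; w'] by rewrite -E set22.
by rewrite in_set2 eq_sym (negbTE uw) /= => /eqP.
Qed.

Lemma deg_subset F G v : G \subset F -> deg G v <= deg F v.
Proof.
move=> GF; apply: subset_leq_card; apply/subsetP => e; rewrite !inE => /andP [eG ->].
by rewrite (subsetP GF).
Qed.

Lemma deg_setD F G v : G \subset F -> deg F v = deg G v + deg (F :\: G) v.
Proof.
move=> GF; rewrite /deg -cardsUI.
have -> : [set e in G | v \in e] :&: [set e in F :\: G | v \in e] = set0.
  by apply/setP => e; rewrite !inE; case: (e \in G); rewrite ?andbF.
rewrite cards0 addn0; apply: eq_card => e; rewrite !inE.
by case eG: (e \in G); rewrite /= ?(subsetP GF e eG) ?orbF.
Qed.

Lemma proper_coloringS F G col :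
  G \subset F -> proper_coloring F col -> proper_coloring G col.
Proof. by move=> GF pc e1 e2 /(subsetP GF) e1F /(subsetP GF); apply: pc. Qed.

Lemma missing_color_exists F col v n : deg F v < n -> exists2 a, a < n & missing F col v a.
Proof.
move=> dn; pose U := [seq col e | e <- enum [set e in F | v \in e]].
have sU : size U < n by rewrite size_map -cardE.
have : ~~ all (mem U) (iota 0 n).
  apply/negP => /allP sub; have := uniq_leq_size (iota_uniq 0 n) sub.
  by rewrite size_iota leqNgt sU.
case/allPn => a; rewrite mem_iota add0n => an aU; exists a => // e eF ve.
apply: contra aU => /eqP <-; apply: map_f.
by rewrite mem_enum inE eF ve.
Qed.

Definition recolor col e0 a e := if e == e0 then a else col e.

Lemma recolor_proper F e0 col a :
  proper_coloring (F :\ e0) col -> (forall v, v \in e0 -> missing (F :\ e0) col v a) ->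
  proper_coloring F (recolor col e0 a).
Proof.
move=> pc ma e1 e2 e1F e2F e12 v ve1 ve2; rewrite /recolor.
have inD e : e \in F -> e != e0 -> e \in F :\ e0 by rewrite !inE => -> ->.
case: (e1 =P e0) => [E1|/eqP n1]; case: (e2 =P e0) => [E2|/eqP n2].
- by move: e12; rewrite E1 E2 eqxx.
- by rewrite eq_sym; apply: (ma v); [rewrite -E1 | apply: inD |].
- by apply: (ma v); [rewrite -E2 | apply: inD |].
- exact: (pc _ _ (inD _ e1F n1) (inD _ e2F n2) e12 v).
Qed.

Lemma colorable_missing_both F e0 col a n :
  proper_coloring (F :\ e0) col -> (forall e, e \in F :\ e0 -> col e < n) -> a < n ->
  (forall v, v \in e0 -> missing (F :\ e0) col v a) -> colorable F n.
Proof.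
move=> pc cn an ma; exists (recolor col e0 a); first exact: recolor_proper.
move=> e eF; rewrite /recolor; case: eqP => // /eqP ne; apply: cn.
by rewrite !inE ne eF.
Qed.

Definition swapn (a b x : nat) : nat := if x == a then b else if x == b then a else x.

Lemma swapnK a b : involutive (swapn a b).
Proof.
move=> x; rewrite /swapn.
case: (x =P a) => [->|xa]; first by rewrite eqxx; case: eqP.
by case: (x =P b) => [->|xb]; rewrite ?eqxx //; do 2!case: eqP => //.
Qed.

Definition kempe_edge F col a b e := (e \in F) && ((col e == a) || (col e == b)).

Definition kempe_adj F col a b : rel T :=
  fun u w => (u != w) && kempe_edge F col a b [set u; w].

Definition kempe_closed F col a b (S : {set T}) :=
  forall u w, u \in S -> kempe_adj F col a b u w -> w \in S.

Definition kempe_chain F col a b y := [set z | connect (kempe_adj F col a b) y z].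

Definition kempe_swap col a b (S : {set T}) e :=
  if [exists v in e, v \in S] then swapn a b (col e) else col e.

Lemma kempe_chain_closed F col a b y : kempe_closed F col a b (kempe_chain F col a b y).
Proof. by move=> u w; rewrite !inE => yu /connect1; apply: connect_trans. Qed.

Lemma kempe_closed_edge F col a b S e v v' :
  simple_graph F -> kempe_closed F col a b S -> kempe_edge F col a b e ->
  v \in e -> v' \in e -> v \in S -> v' \in S.
Proof.
move=> sF cS ke ve v'e vS; have eF : e \in F by case/andP: ke.
have [w vw Ee] := card2_memE (edge_card2 sF eF) ve.
move: v'e; rewrite Ee in_set2 => /orP [/eqP -> //|/eqP ->].
by apply: (cS v) => //; rewrite /kempe_adj vw -Ee.
Qed.

Lemma kempe_swap_proper F col a b S :
  simple_graph F -> proper_coloring F col -> kempe_closed F col a b S ->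
  proper_coloring F (kempe_swap col a b S).
Proof.
move=> sF pc cS e1 e2 e1F e2F e12 v ve1 ve2; rewrite /kempe_swap.
have key e e' : e \in F -> e' \in F -> v \in e -> v \in e' ->
   [exists z in e, z \in S] -> ~~ [exists z in e', z \in S] ->
   swapn a b (col e) != col e'.
  move=> eF e'F ve ve' /existsP [z /andP [ze zS]] nS.
  case ke : (kempe_edge F col a b e).
    have vS := kempe_closed_edge sF cS ke ze ve zS.
    by case/negP: nS; apply/existsP; exists v; rewrite ve' vS.
  move: ke; rewrite /kempe_edge eF /= /swapn => /norP [/negbTE -> /negbTE ->].
  apply: (pc _ _ eF e'F _ v ve ve'); apply: contra nS => /eqP <-.
  by apply/existsP; exists z; rewrite ze zS.
case: ifP => t1; case: ifP => t2.
- by rewrite (inj_eq (can_inj (@swapnK a b))); apply: (pc _ _ e1F e2F e12 v).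
- by apply: key => //; rewrite t2.
- by rewrite eq_sym; apply: key => //; rewrite t1.
- by apply: (pc _ _ e1F e2F e12 v).
Qed.

Lemma kempe_swap_missing_in F col a b (S : {set T}) v :
  a != b -> v \in S -> missing F col v b -> missing F (kempe_swap col a b S) v a.
Proof.
move=> ab vS mb e eF ve; rewrite /kempe_swap.
have -> : [exists z in e, z \in S] by apply/existsP; exists v; rewrite ve vS.
have := mb e eF ve; rewrite /swapn.
case: (col e =P a) => [_ _|na]; first by rewrite eq_sym.
by case: (col e =P b) => // _ _; apply/eqP.
Qed.

Lemma kempe_swap_missing_out F col a b S v d :
  simple_graph F -> kempe_closed F col a b S -> v \notin S -> missing F col v d ->
  missing F (kempe_swap col a b S) v d.
Proof.
move=> sF cS vS md e eF ve; rewrite /kempe_swap.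
case: ifP => [/existsP [z /andP [ze zS]]|_]; last exact: md.
case ke : (kempe_edge F col a b e).
  by move: vS; rewrite (kempe_closed_edge sF cS ke ze ve zS).
move: ke; rewrite /kempe_edge eF /= /swapn => /norP [/negbTE -> /negbTE ->].
exact: md.
Qed.

Lemma kempe_swap_lt col a b (S : {set T}) n e :
  a < n -> b < n -> col e < n -> kempe_swap col a b S e < n.
Proof. by move=> an bn cn; rewrite /kempe_swap /swapn; do !case: ifP. Qed.

Lemma colorable_kempe_swap F x y col a b n :
  simple_graph F -> let F0 := F :\ [set x; y] in
  proper_coloring F0 col -> (forall e, e \in F0 -> col e < n) -> a < n -> b < n ->
  a != b -> missing F0 col x a -> missing F0 col y b ->
  x \notin kempe_chain F0 col a b y -> colorable F n.
Proof.
move=> sF F0 pc cn an bn ab ma mb xS.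
have sF0 : simple_graph F0 by apply: simple_graphS sF; apply: subsetDl.
have cS := @kempe_chain_closed F0 col a b y.
apply: (colorable_missing_both (e0 := [set x; y])
          (col := kempe_swap col a b (kempe_chain F0 col a b y)) (a := a)).
- exact: kempe_swap_proper.
- by move=> e /cn; apply: kempe_swap_lt.
- done.
- move=> v; rewrite in_set2 => /orP [] /eqP ->; first exact: kempe_swap_missing_out.
  by apply: kempe_swap_missing_in; rewrite // inE connect0.
Qed.

Lemma kempe_adj_sym F col a b : symmetric (kempe_adj F col a b).
Proof. by move=> u w; rewrite /kempe_adj eq_sym setUC. Qed.

Lemma kempe_adjP F col a b u w :
  kempe_adj F col a b u w ->
  [/\ u != w, [set u; w] \in F & (col [set u; w] == a) || (col [set u; w] == b)].
Proof. by case/andP => uw /andP [-> ->]. Qed.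

Lemma kempe_adj_le2 F col a b u w1 w2 w3 :
  proper_coloring F col -> kempe_adj F col a b u w1 -> kempe_adj F col a b u w2 ->
  kempe_adj F col a b u w3 -> w1 != w2 -> (w3 == w1) || (w3 == w2).
Proof.
move=> pc /kempe_adjP [u1 f1 c1] /kempe_adjP [u2 f2 c2] /kempe_adjP [u3 f3 c3] w12.
have ne w w' : u != w -> w != w' -> [set u; w] != [set u; w'].
  by move=> uw ww'; apply: contra ww' => /eqP /(set2_injr uw) ->.
case: (w3 =P w1) => // /eqP n31; case: (w3 =P w2) => // /eqP n32.
have d12 := pc _ _ f1 f2 (ne _ _ u1 w12) u (set21 _ _) (set21 _ _).
have d31 := pc _ _ f3 f1 (ne _ _ u3 n31) u (set21 _ _) (set21 _ _).
have d32 := pc _ _ f3 f2 (ne _ _ u3 n32) u (set21 _ _) (set21 _ _).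
by move: c1 c2 c3 d12 d31 d32; do 3 case/orP => /eqP ->; rewrite ?eqxx.
Qed.

Lemma kempe_adj_missing F col a b u w1 w2 :
  proper_coloring F col -> missing F col u a \/ missing F col u b ->
  kempe_adj F col a b u w1 -> kempe_adj F col a b u w2 -> w1 = w2.
Proof.
move=> pc mu /kempe_adjP [u1 f1 c1] /kempe_adjP [u2 f2 c2].
case: (w1 =P w2) => // /eqP n12; exfalso.
have ne : [set u; w1] != [set u; w2] by apply: contra n12 => /eqP /(set2_injr u1) ->.
have d12 := pc _ _ f1 f2 ne u (set21 _ _) (set21 _ _).
by case: mu => mu; have m1 := mu _ f1 (set21 _ _); have m2 := mu _ f2 (set21 _ _);
  move: c1 c2 d12 m1 m2; do 2 case/orP => /eqP ->; rewrite ?eqxx.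
Qed.

End EdgeColoring.

Section DegreeTwoPaths.

Variables (T : finType) (r : rel T).
Hypothesis r_sym : symmetric r.

Lemma connect_in_closed (S : {set T}) a z :
  (forall u w, u \in S -> r u w -> w \in S) -> a \in S -> connect r a z -> z \in S.
Proof.
move=> cS + /connectP [p pp ->]; elim: p a pp => [//|y p IH] a /= /andP [ray pp] aS.
by apply: IH pp _; apply: cS ray.
Qed.

Lemma uniq_path_interior a p i : path r a p -> uniq (a :: p) -> 0 < i < size p ->
  [/\ r (nth a (a :: p) i) (nth a (a :: p) i.-1), r (nth a (a :: p) i) (nth a (a :: p) i.+1)
    & nth a (a :: p) i.-1 != nth a (a :: p) i.+1].
Proof.
move=> pp uq /andP [i0 ip].
have step j : j < size p -> r (nth a (a :: p) j) (nth a (a :: p) j.+1) by exact: (pathP a pp j).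
split.
- by rewrite r_sym; have := step i.-1; rewrite prednK //; apply; lia.
- exact: step.
- have sq : size (a :: p) = (size p).+1 by [].
  by rewrite nth_uniq // ?sq; lia.
Qed.

Hypothesis le2 :
  forall u w1 w2 w3, r u w1 -> r u w2 -> r u w3 -> w1 != w2 -> (w3 == w1) || (w3 == w2).

Definition end_vertex u := forall w1 w2, r u w1 -> r u w2 -> w1 = w2.

Lemma uniq_path_closed a p u w :
  end_vertex a -> end_vertex (last a p) -> path r a p -> uniq (a :: p) -> 0 < size p ->
  u \in a :: p -> r u w -> w \in a :: p.
Proof.
move=> da db pp uq p0 uin ruw; set q := a :: p.
have inq i : i <= size p -> nth a q i \in q by move=> ip; apply: mem_nth.
have step j : j < size p -> r (nth a q j) (nth a q j.+1) by exact: (pathP a pp j).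
have Eu : u = nth a q (index u q) by rewrite nth_index.
have : index u q <= size p by rewrite -ltnS index_mem.
rewrite leq_eqVlt => /orP [/eqP iN|].
  have rp : r u (nth a q (size p).-1).
    by rewrite r_sym Eu iN; have := step (size p).-1; rewrite prednK //; apply; lia.
  have ub : u = last a p by rewrite Eu iN /q -[size p]/((size (a :: p)).-1) nth_last.
  by rewrite ub in ruw rp; rewrite (db _ _ ruw rp); apply: inq; lia.
case: (posnP (index u q)) => [i0 _|ip iN].
  rewrite Eu i0 in ruw; rewrite (da _ _ ruw (step 0 p0)); exact: inq.
have [r1 r2 ne] := uniq_path_interior pp uq (introT andP (conj ip iN)).
rewrite -Eu in r1 r2.
by case/orP: (le2 r1 r2 ruw ne) => /eqP ->; apply: inq; lia.
Qed.

(* A connected component of a graph of maximum degree 2 is a path or a cycle,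
   so it cannot contain three distinct vertices of degree at most 1. *)
Lemma no_three_ends a b c :
  end_vertex a -> end_vertex b -> end_vertex c -> a != b -> c != a -> c != b ->
  connect r a b -> connect r a c -> False.
Proof.
move=> da db dc ab ca cb /connectP [pb ppb Eb] /connectP [pc ppc Ec]; subst b c.
move: ab db cb; case: (shortenP ppb) => p pp uq _ ab db cb {ppb}.
have p0 : 0 < size p by move: ab; case: (p) => //=; rewrite eqxx.
have cq : last a pc \in [set z | z \in a :: p].
  apply: (@connect_in_closed _ a); last by apply/connectP; exists pc.
  - by move=> u w; rewrite !inE; apply: uniq_path_closed.
  - by rewrite inE mem_head.
rewrite inE in cq; set c := last a pc in ca cb dc cq.
have Ec : c = nth a (a :: p) (index c (a :: p)) by rewrite nth_index.
have i0 : 0 < index c (a :: p).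
  by rewrite lt0n; apply: contraNneq ca => i0; rewrite Ec i0.
have iN : index c (a :: p) < size p.
  have : index c (a :: p) < (size p).+1 by rewrite index_mem.
  rewrite ltnS leq_eqVlt => /orP [/eqP iN|//].
  by move: cb; rewrite Ec iN -[size p]/((size (a :: p)).-1) nth_last eqxx.
have [r1 r2 ne] := uniq_path_interior pp uq (introT andP (conj i0 iN)).
rewrite -Ec in r1 r2.
by move: ne; rewrite (dc _ _ r1 r2) eqxx.
Qed.

End DegreeTwoPaths.

Section Fan.

Variable T : finType.
Implicit Type e : {set T}.

(* Each of the first [i] edges of the fan takes the colour of its successor,
   which frees the colour of the [i]-th edge. *)
Definition fan_shift (c : {set T} -> nat) (es : seq {set T}) i e :=
  if index e es < i then c (nth set0 es (index e es).+1) else c e.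

(* [ys = y0 :: y1 :: ...] is a fan at [x]: [x y0] is the uncoloured edge and the
   colour of each edge [x y_(j+1)] is missing at [y_j]. *)
Definition fan (F : {set {set T}}) (x y0 : T) (ys : seq T) (c : {set T} -> nat) :=
  [/\ simple_graph F, x \notin ys, uniq ys, nth y0 ys 0 = y0 /\ 0 < size ys &
      [/\ [set x; y0] \in F,
          forall j, 0 < j < size ys -> [set x; nth y0 ys j] \in F :\ [set x; y0],
          forall j, j.+1 < size ys ->
            missing (F :\ [set x; y0]) c (nth y0 ys j) (c [set x; nth y0 ys j.+1])
        & proper_coloring (F :\ [set x; y0]) c]].

Variables (F : {set {set T}}) (x y0 : T) (ys : seq T) (c : {set T} -> nat).
Hypothesis fanF : fan F x y0 ys c.

Local Notation Fp := (F :\ [set x; y0]).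
Local Notation es := [seq [set x; y] | y <- ys].
Local Notation shift := (fan_shift c es).

Lemma fan_leaf_neq j : j < size ys -> nth y0 ys j != x.
Proof. by case: fanF => _ xys _ _ _ jn; apply: contraNneq xys => <-; apply: mem_nth. Qed.

Lemma fan_leaf_notin_take j : j < size ys -> nth y0 ys j \notin take j ys.
Proof.
case: fanF => _ _ uys _ _ jn.
have : uniq (take j ys ++ drop j ys) by rewrite cat_take_drop.
rewrite cat_uniq => /and3P [_ /hasPn dis _]; apply: dis.
have -> : nth y0 ys j = nth y0 (drop j ys) 0 by rewrite nth_drop addn0.
by apply: mem_nth; rewrite size_drop subn_gt0.
Qed.

Lemma index_fan_edge j : j < size ys -> index [set x; nth y0 ys j] es = j.
Proof.
case: fanF => _ xys uys _ _ jn.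
have inj : {in ys &, injective (fun y => [set x; y])}.
  by move=> y y' yin _ /set2_injr; apply; apply: contraNneq xys => ->.
rewrite -(nth_map y0 set0 (fun y => [set x; y]) jn) index_uniq ?size_map //.
by rewrite map_inj_in_uniq.
Qed.

Lemma index_fan_edge_out e : x \notin e -> index e es = size ys.
Proof.
move=> xe; rewrite -(size_map (fun y => [set x; y]) ys); apply/memNindex.
by apply: contra xe => /mapP [y _ ->]; rewrite set21.
Qed.

Lemma fan_edgeE e : index e es < size ys -> e = [set x; nth y0 ys (index e es)].
Proof.
move=> ie; rewrite -(nth_map y0 set0 (fun y => [set x; y]) ie) nth_index //.
by rewrite -index_mem size_map.
Qed.

Lemma fan_edge_in i : i < size ys -> [set x; nth y0 ys i] \in F.
Proof.
case: fanF => _ _ _ [hy0 _] [e0F esF _ _] isz; case: (posnP i) => [->|ip].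
  by rewrite hy0.
by have := esF i; rewrite ip isz => /(_ isT); rewrite inE => /andP [].
Qed.

Section Shift.

Variable i : nat.
Hypothesis isz : i < size ys.

Local Notation Fi := (F :\ [set x; nth y0 ys i]).

Lemma fan_shift_lo e :
  index e es < i -> shift i e = c [set x; nth y0 ys (index e es).+1].
Proof. by move=> ie; rewrite /fan_shift ie (nth_map y0) // (leq_ltn_trans ie isz). Qed.

Lemma fan_shift_hi e : i <= index e es -> shift i e = c e.
Proof. by rewrite /fan_shift ltnNge => ->. Qed.

Lemma fan_shift_hi_mem e : i <= index e es -> e \in Fi -> e \in Fp.
Proof.
move=> ie; rewrite !inE => /andP [ne eF]; rewrite eF andbT.
have [_ _ _ [hy0 sz] _] := fanF.
apply: contraNneq ne => Ee; move: ie; rewrite Ee -{1 2}hy0 index_fan_edge // leqn0.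
by move/eqP ->.
Qed.

Lemma fan_shift_proper : proper_coloring Fi (shift i).
Proof.
have [_ _ _ _ [_ esF fanm pc]] := fanF.
have lo e : index e es < i -> (index e es).+1 < size ys.
  by move=> ie; apply: leq_ltn_trans isz.
have asym e1 e2 v : e1 \in Fi -> e2 \in Fi -> e1 != e2 -> v \in e1 -> v \in e2 ->
    index e1 es < i -> i <= index e2 es -> shift i e1 != shift i e2.
  move=> e1F e2F e12 ve1 ve2 i1 i2.
  rewrite (fan_shift_lo i1) (fan_shift_hi i2).
  have E1 := fan_edgeE (ltn_trans i1 isz); have j1 := lo _ i1.
  set j := index e1 es in E1 i1 j1 *.
  have e2p := fan_shift_hi_mem i2 e2F.
  have ejp : [set x; nth y0 ys j.+1] \in Fp by apply: esF.
  move: ve1; rewrite E1 in_set2 => /orP [/eqP vx|/eqP vy].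
  - rewrite vx in ve2; apply: (pc _ _ ejp e2p _ x (set21 _ _) ve2).
    apply/eqP => E2; move: i2 e2F; rewrite -E2 index_fan_edge // => ij.
    have -> : i = j.+1 by apply/eqP; rewrite eqn_leq ij i1.
    by rewrite !inE eqxx.
  - by rewrite eq_sym; apply: (fanm j j1); rewrite -?vy.
move=> e1 e2 e1F e2F e12 v ve1 ve2.
case: (ltnP (index e1 es) i) => i1; case: (ltnP (index e2 es) i) => i2.
- have j1 := lo _ i1; have j2 := lo _ i2.
  rewrite (fan_shift_lo i1) (fan_shift_lo i2).
  apply: (pc _ _ (esF _.+1 j1) (esF _.+1 j2) _ x (set21 _ _) (set21 _ _)).
  apply: contra e12 => /eqP /(congr1 (index^~ es)).
  rewrite !index_fan_edge // => -[] ee.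
  by rewrite (fan_edgeE (ltn_trans i1 isz)) (fan_edgeE (ltn_trans i2 isz)) ee.
- exact: (asym e1 e2 v).
- by rewrite eq_sym; apply: (asym e2 e1 v); rewrite // eq_sym.
- rewrite (fan_shift_hi i1) (fan_shift_hi i2).
  exact: (pc _ _ (fan_shift_hi_mem i1 e1F) (fan_shift_hi_mem i2 e2F) e12 v).
Qed.

Lemma fan_shift_lt n : (forall e, e \in Fp -> c e < n) -> forall e, e \in Fi -> shift i e < n.
Proof.
have [_ _ _ _ [_ esF _ _]] := fanF; move=> cn e eF.
case: (ltnP (index e es) i) => ie; last by rewrite fan_shift_hi // cn // fan_shift_hi_mem.
by rewrite fan_shift_lo // cn // esF //= (leq_ltn_trans ie isz).
Qed.

Lemma fan_shift_missing_center a : missing Fp c x a -> missing Fi (shift i) x a.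
Proof.
have [_ _ _ _ [_ esF _ _]] := fanF; move=> ma e eF xe.
case: (ltnP (index e es) i) => ie; last by rewrite fan_shift_hi // ma // fan_shift_hi_mem.
by rewrite fan_shift_lo // ma ?set21 // esF //= (leq_ltn_trans ie isz).
Qed.

Lemma fan_shift_missing_leaf a :
  missing Fp c (nth y0 ys i) a -> missing Fi (shift i) (nth y0 ys i) a.
Proof.
move=> ma e eF ve; case: (ltnP (index e es) i) => ie.
  have Ee := fan_edgeE (ltn_trans ie isz).
  move: ve; rewrite Ee in_set2 (negbTE (fan_leaf_neq isz)) /= => /eqP yE.
  have := fan_leaf_notin_take isz; rewrite yE -(nth_take y0 ie) mem_nth //.
  by rewrite size_take isz.
by rewrite fan_shift_hi // ma // fan_shift_hi_mem.
Qed.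

Lemma fan_shift_off_center e : x \notin e -> shift i e = c e /\ (e \in Fi) = (e \in Fp).
Proof.
move=> xe; rewrite fan_shift_hi; last by rewrite index_fan_edge_out // ltnW.
split => //; rewrite !inE; congr andb.
have ne y : e != [set x; y] by apply: contraNneq xe => ->; rewrite set21.
by rewrite !ne.
Qed.

Lemma fan_colorable_missing a n :
  (forall e, e \in Fp -> c e < n) -> a < n ->
  missing Fp c x a -> missing Fp c (nth y0 ys i) a -> colorable F n.
Proof.
move=> cn an ma mb.
apply: (colorable_missing_both (e0 := [set x; nth y0 ys i]) (col := shift i) (a := a)).
- exact: fan_shift_proper.
- exact: fan_shift_lt.
- done.
- move=> v; rewrite in_set2 => /orP [] /eqP ->.
    exact: fan_shift_missing_center.
  exact: fan_shift_missing_leaf.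
Qed.

Lemma fan_colorable_or_chain a b n :
  (forall e, e \in Fp -> c e < n) -> a < n -> b < n -> a != b ->
  missing Fp c x a -> missing Fp c (nth y0 ys i) b ->
  colorable F n \/ x \in kempe_chain Fi (shift i) a b (nth y0 ys i).
Proof.
have [sF _ _ _ _] := fanF; move=> cn an bn ab ma mb.
case: (boolP (x \in _)) => xS; [by right | left].
exact: (colorable_kempe_swap sF fan_shift_proper (fan_shift_lt cn) an bn ab
          (fan_shift_missing_center ma) (fan_shift_missing_leaf mb) xS).
Qed.

End Shift.

Lemma fan_edge_neq j l :
  j < size ys -> l < size ys -> j != l -> [set x; nth y0 ys j] != [set x; nth y0 ys l].
Proof.
move=> js ls; apply: contraNneq => /(congr1 (index^~ es)) /=.
by rewrite !index_fan_edge // => ->.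
Qed.

Section TwoChains.

Variables (a b i : nat).
Hypotheses (i_gt0 : 0 < i) (i_lt : i < (size ys).-1) (ab : a != b).
Hypotheses (ma : missing Fp c x a) (c_ei : c [set x; nth y0 ys i] = b).

Local Notation k := (size ys).-1.
Local Notation adj j := (kempe_adj (F :\ [set x; nth y0 ys j]) (shift j) a b).
Local Notation chain j := (kempe_chain (F :\ [set x; nth y0 ys j]) (shift j) a b (nth y0 ys j)).

Let ksz : k < size ys.
Proof. by case: fanF => _ _ _ [_ sz] _; rewrite prednK. Qed.

Let isz : i < size ys.
Proof. exact: ltn_trans i_lt ksz. Qed.

Let i1sz : i.-1 < size ys.
Proof. exact: leq_ltn_trans (leq_pred i) isz. Qed.

Lemma fan_shift_center_ab f : f \in F :\ [set x; nth y0 ys i.-1] -> x \in f ->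
  (shift i.-1 f == a) || (shift i.-1 f == b) -> f = [set x; nth y0 ys i].
Proof.
move=> fF xf /orP [/eqP fa|/eqP fb].
  by move: (fan_shift_missing_center i1sz ma fF xf); rewrite fa eqxx.
case: (f =P [set x; nth y0 ys i]) => // /eqP nf; exfalso.
have eiF : [set x; nth y0 ys i] \in F :\ [set x; nth y0 ys i.-1].
  by rewrite !inE fan_edge_in // andbT fan_edge_neq //; lia.
have := fan_shift_proper i1sz fF eiF nf xf (set21 _ _).
by rewrite fb fan_shift_hi ?index_fan_edge ?leq_pred // c_ei eqxx.
Qed.

Lemma fan_shift_missing_mid : missing (F :\ [set x; nth y0 ys k]) (shift k) (nth y0 ys i) b.
Proof.
have [_ _ uys _ [_ esF _ pc]] := fanF.
have eiFp : [set x; nth y0 ys i] \in Fp by apply: esF; rewrite i_gt0.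
move=> f fF yf; rewrite -c_ei; case: (ltnP (index f es) k) => jf.
  have Ef := fan_edgeE (ltn_trans jf ksz).
  have fi : index f es = i.
    move: yf; rewrite {1}Ef in_set2 (negbTE (fan_leaf_neq isz)) /= nth_uniq //.
      by move/eqP.
    exact: ltn_trans jf ksz.
  rewrite fan_shift_lo // fi.
  apply: (pc _ _ _ eiFp _ x (set21 _ _) (set21 _ _)).
    by apply: esF; rewrite /= (leq_ltn_trans i_lt).
  by rewrite fan_edge_neq // ?(leq_ltn_trans i_lt) // gtn_eqF.
rewrite fan_shift_hi //; apply: (pc _ _ (fan_shift_hi_mem jf fF) eiFp _ _ yf (set22 _ _)).
by apply: contraTneq jf => ->; rewrite index_fan_edge // -ltnNge.
Qed.

Lemma fan_chain_center_edge : adj k x (nth y0 ys i.-1).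
Proof.
have i1k : i.-1 < k by apply: leq_ltn_trans (leq_pred i) i_lt.
rewrite /kempe_adj eq_sym fan_leaf_neq //= /kempe_edge.
rewrite (fan_shift_lo ksz) index_fan_edge // prednK // c_ei eqxx orbT andbT.
by rewrite !inE fan_edge_in // andbT fan_edge_neq // ltn_eqF.
Qed.

Lemma fan_leaf_in_chain : x \in chain k -> x \in chain i.-1 -> nth y0 ys i \in chain k.
Proof.
move=> xS xS'; apply: contraT => YiS.
pose S := chain k :\ x.
have cl u w : u \in S -> adj i.-1 u w -> w \in S.
  rewrite !inE => /andP [ux uS] /kempe_adjP [uw fF fc].
  case: (boolP (x \in [set u; w])) => xf.
    have : u \in [set x; nth y0 ys i] by rewrite -(fan_shift_center_ab fF xf fc) set21.
    rewrite in_set2 (negbTE ux) /= => /eqP uYi.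
    by move: YiS; rewrite -uYi inE uS.
  have [ce fe] := fan_shift_off_center ksz xf.
  have [ce' fe'] := fan_shift_off_center i1sz xf.
  have rKuw : adj k u w by rewrite /kempe_adj uw /kempe_edge fe -fe' fF ce -ce' fc.
  rewrite (connect_trans uS (connect1 rKuw)) andbT.
  by apply: contraNneq xf => ->; rewrite set22.
have Yi1S : nth y0 ys i.-1 \in S.
  rewrite !inE fan_leaf_neq //=.
  by rewrite inE in xS; apply: connect_trans xS (connect1 fan_chain_center_edge).
rewrite inE in xS'; have := connect_in_closed cl Yi1S xS'.
by rewrite !inE eqxx.
Qed.

Lemma fan_two_chains_false :
  missing Fp c (nth y0 ys k) b -> x \in chain k -> x \in chain i.-1 -> False.
Proof.
move=> mb xS xS'; have [_ _ uys _ _] := fanF.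
have pK := fan_shift_proper ksz.
have mxk := fan_shift_missing_center ksz ma.
have myk := fan_shift_missing_leaf ksz mb.
have myi := fan_shift_missing_mid.
apply: (@no_three_ends _ (adj k) _ _ (nth y0 ys k) x (nth y0 ys i)).
- exact: kempe_adj_sym.
- by move=> u w1 w2 w3; apply: kempe_adj_le2.
- by move=> w1 w2; apply: kempe_adj_missing => //; right.
- by move=> w1 w2; apply: kempe_adj_missing => //; left.
- by move=> w1 w2; apply: kempe_adj_missing => //; right.
- exact: fan_leaf_neq.
- by rewrite nth_uniq // ltn_eqF.
- exact: fan_leaf_neq.
- by rewrite inE in xS.
- by have := fan_leaf_in_chain xS xS'; rewrite inE.
Qed.

End TwoChains.

End Fan.

Section Vizing.

Variable T : finType.
Implicit Types (F : {set {set T}}) (c : {set T} -> nat).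

Lemma fan_maximal F x y0 c :
  simple_graph F -> x != y0 -> [set x; y0] \in F -> proper_coloring (F :\ [set x; y0]) c ->
  let Fp := F :\ [set x; y0] in
  exists t : seq T, fan F x y0 (y0 :: t) c /\
    forall y, y \notin y0 :: t -> y != x ->
      ~~ (([set x; y] \in Fp) && missingb Fp c (last y0 t) (c [set x; y])).
Proof.
move=> sF xy0 e0F pc Fp.
pose R : rel T := fun u w => ([set x; w] \in Fp) && missingb Fp c u (c [set x; w]).
pose isfan (t : seq T) := [&& path R y0 t, uniq (y0 :: t) & x \notin y0 :: t].
pose P s := [exists t : s.-tuple T, isfan t].
have P0 : exists s, P s by exists 0; apply/existsP; exists [tuple]; rewrite /isfan /= !inE.
have Pb s : P s -> s <= #|T|.
  move=> /existsP [t /and3P [_ ut _]]; have := max_card (mem (y0 :: t)).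
  by rewrite (card_uniqP ut) /= size_tuple => /ltnW.
case: (ex_maxnP P0 Pb) => s /existsP [t /and3P [pt ut xt]] smax.
exists t; split.
  split=> //; split=> //.
  - move=> j /andP [j0 js]; have := pathP y0 pt j.-1.
    rewrite prednK //= => /(_ js) /andP [].
    by case: j j0 js => [//|j] _ _ /= h _.
  - by move=> j js; have := pathP y0 pt j js => /andP [_ /missingP].
move=> y yt yx; apply/negP => Ry; have {}Ry : R (last y0 t) y := Ry.
have : P (size (rcons t y)).
  apply/existsP; exists (in_tuple (rcons t y)) => /=.
  rewrite /isfan rcons_path pt Ry /= -rcons_cons.
  move: ut xt yt; rewrite /= !mem_rcons !inE !negb_or rcons_uniq.
  move=> /andP [h1 h2] /andP [h3 h4] /andP [yy0 h5].
  by rewrite mem_rcons inE negb_or h1 h2 h3 h4 h5 eq_sym yy0 eq_sym yx.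
by move/smax; rewrite size_rcons size_tuple ltnn.
Qed.

(* Extend the fan at [x] as far as possible. Either shifting colours along the
   fan frees one colour at both ends of the uncoloured edge, or a Kempe swap
   does; otherwise one [a]/[b]-path would have three ends. *)
Lemma vizing_step F x y0 c n :
  simple_graph F -> x != y0 -> [set x; y0] \in F -> proper_coloring (F :\ [set x; y0]) c ->
  (forall e, e \in F :\ [set x; y0] -> c e < n) -> (forall v, deg F v < n) -> colorable F n.
Proof.
move=> sF xy0 e0F pc cn dn.
have [t [fanF tmax]] := fan_maximal sF xy0 e0F pc.
set Fp := F :\ [set x; y0] in cn pc tmax; set ys := y0 :: t in fanF tmax.
have [_ _ _ _ [_ _ fanm _]] := fanF.
have ksz : size t < size ys by [].
have ykE : nth y0 ys (size t) = last y0 t by rewrite nth_last.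
have dFp v : deg Fp v < n by apply: leq_ltn_trans (dn v); apply/deg_subset/subsetDl.
have [a an ma] := missing_color_exists c (dFp x).
have [b bn mb] := missing_color_exists c (dFp (last y0 t)).
case: (boolP (missingb Fp c x b)) => [/missingP mxb|].
  by apply: (fan_colorable_missing fanF ksz cn bn mxb); rewrite ykE.
rewrite negb_forall_in => /existsP [e /andP [eFp]]; rewrite negb_imply negbK.
case/andP => xe /eqP ceb.
have [y xy Ee] := card2_memE (edge_card2 sF (subsetP (subsetDl _ _) _ eFp)) xe.
have yys : y \in ys.
  apply: contraT => yn; have := tmax y yn; rewrite eq_sym xy -Ee eFp /=.
  by move=> /(_ isT) /negbTE <-; apply/missingP; rewrite ceb.
set i := index y ys.
have Ei : e = [set x; nth y0 ys i] by rewrite nth_index.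
have i_gt0 : 0 < i.
  by rewrite lt0n; apply: contraTneq eFp => i0; rewrite Ei i0 !inE eqxx.
have i_lt : i < size t.
  have : i < size ys by rewrite index_mem.
  rewrite ltnS leq_eqVlt => /orP [/eqP ik|//].
  by have := mb e eFp; rewrite ceb eqxx Ei ik ykE set22 => /(_ isT).
have ab : a != b by rewrite -ceb eq_sym; apply: ma.
have ceib : c [set x; nth y0 ys i] = b by rewrite -Ei.
have mbi : missing Fp c (nth y0 ys i.-1) b.
  by rewrite -ceib; have := fanm i.-1; rewrite prednK //; apply; apply: ltn_trans i_lt _.
rewrite -ykE in mb.
have [|xS] := fan_colorable_or_chain fanF ksz cn an bn ab ma mb; first done.
have [|xS'] := fan_colorable_or_chain fanF (leq_ltn_trans (leq_pred i) (ltn_trans i_lt ksz))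
  cn an bn ab ma mbi; first done.
by case: (fan_two_chains_false fanF i_gt0 i_lt ab ma ceib mb xS xS').
Qed.

Theorem vizing F n : simple_graph F -> (forall v, deg F v < n) -> colorable F n.
Proof.
have [m] := ubnP #|F|; elim: m F => // m IH F cF sF dn.
case: (set_0Vmem F) => [->|[e0 e0F]]; first by exists (fun _ => 0) => // e; rewrite inE.
have /cards2P [x [y0 [xy0 Ee0]]] : #|e0| == 2 by rewrite (edge_card2 sF e0F).
have [c pc cn] : colorable (F :\ e0) n.
  apply: IH; first by rewrite (cardsD1 e0 F) e0F in cF.
    exact: simple_graphS (subsetDl _ _) sF.
  by move=> v; apply: leq_ltn_trans (dn v); apply/deg_subset/subsetDl.
rewrite Ee0 in e0F pc cn.
exact: vizing_step sF xy0 e0F pc cn dn.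
Qed.

End Vizing.

Lemma sumn_le_size_mul (s : seq nat) t : all (leq^~ t) s -> sumn s <= size s * t.
Proof. by elim: s => //= y s IH /andP [yt /IH h]; rewrite mulSn leq_add. Qed.

Lemma sorted_prefix_sumn (w : seq nat) j :
  sorted geq w -> j <= size w -> j * sumn w <= size w * sumn (take j w).
Proof.
elim: w j => [|x w IH] [|j] //= pw; rewrite ltnS => jw.
have allx : all (leq^~ x) w by apply: order_path_min pw => a b d /= h1 h2; apply: leq_trans h2 h1.
have IHj := IH j (path_sorted pw) jw.
have sd : sumn (drop j w) <= size (drop j w) * x.
  by apply: sumn_le_size_mul; apply/allP => y /mem_drop /(allP allx).
have jx : j * x <= size w * x by rewrite leq_mul2r jw orbT.
have sw : sumn w = sumn (take j w) + sumn (drop j w) by rewrite -sumn_cat cat_take_drop.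
move: IHj sd; rewrite sw size_drop; nia.
Qed.

Lemma sumn_take_bracket (w : seq nat) k :
  k < sumn w -> exists2 j, j < size w & sumn (take j w) <= k < sumn (take j.+1 w).
Proof.
elim: w k => [|x w IH] k //= kw.
case: (ltnP k x) => kx; first by exists 0; rewrite //= take0 addn0.
have [|j jw /andP [lo hi]] := IH (k - x); first lia.
by exists j.+1; rewrite //= ?ltnS //; apply/andP; split; lia.
Qed.

Lemma exists_subset_card (T : finType) (A : {set T}) r :
  r <= #|A| -> exists2 B : {set T}, B \subset A & #|B| = r.
Proof.
move=> rA; exists [set f in take r (enum A)].
  by apply/subsetP => f; rewrite inE => /mem_take; rewrite mem_enum.
rewrite cardsE (card_uniqP (take_uniq _ (enum_uniq _))).
by rewrite size_takel // -cardE.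
Qed.

Section ColorClasses.

Variable T : finType.
Implicit Types (E F : {set {set T}}) (col : {set T} -> nat).

Definition color_class E col a := [set f in E | col f == a].

Lemma card_colors_in E col (l : seq nat) :
  uniq l -> #|[set f in E | col f \in l]| = \sum_(a <- l) #|color_class E col a|.
Proof.
elim: l => [_|a l IH /= /andP [al ul]].
  by rewrite big_nil; apply/eqP; rewrite cards_eq0; apply/eqP/setP => f; rewrite !inE andbF.
rewrite big_cons -IH // -cardsUI.
have -> : color_class E col a :&: [set f in E | col f \in l] = set0.
  apply/setP => f; rewrite !inE; apply/negP => /andP [/andP [_ /eqP ca] /andP [_]].
  by rewrite ca (negbTE al).
by rewrite cards0 addn0; apply: eq_card => f; rewrite !inE -andb_orr.
Qed.

Lemma deg_le_colors F col v (l : seq nat) :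
  proper_coloring F col -> (forall f, f \in F -> v \in f -> col f \in l) -> deg F v <= size l.
Proof.
move=> pc hl; rewrite /deg cardE -(size_map col).
apply: uniq_leq_size.
  rewrite map_inj_in_uniq ?enum_uniq // => f1 f2.
  rewrite !mem_enum !inE => /andP [f1F vf1] /andP [f2F vf2] cf.
  apply/eqP; apply: contraTT (eqxx (col f1)) => ne.
  by rewrite {2}cf (pc _ _ f1F f2F ne v vf1 vf2).
by move=> a /mapP [f]; rewrite mem_enum inE => /andP [fF vf] ->; apply: hl.
Qed.

Lemma prefix_color_split E col (ord : seq nat) j k :
  proper_coloring E col -> uniq ord -> (forall e, e \in E -> col e \in ord) -> j < size ord ->
  #|[set f in E | col f \in take j ord]| <= k <= #|[set f in E | col f \in take j.+1 ord]| ->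
  exists2 R : {set {set T}}, R \subset E /\ #|R| = k &
    (forall v, deg R v <= j.+1) /\ (forall v, deg (E :\: R) v <= size ord - j).
Proof.
move=> pc uord cE jn /andP [Sj Sj1]; set a0 := nth 0 ord j.
set A0 := [set f in E | col f \in take j ord] in Sj *.
have tj1 : take j.+1 ord = rcons (take j ord) a0 by rewrite (take_nth 0).
have a0t : a0 \notin take j ord.
  by have := take_uniq j.+1 uord; rewrite tj1 rcons_uniq => /andP [].
have cardA1 : #|[set f in E | col f \in take j.+1 ord]| = #|A0| + #|color_class E col a0|.
  by rewrite !card_colors_in ?take_uniq // tj1 -cats1 big_cat big_seq1.
have [|B BC cB] := @exists_subset_card _ (color_class E col a0) (k - #|A0|); first lia.
have colB f : f \in B -> col f = a0.
  by move=> /(subsetP BC); rewrite inE => /andP [_ /eqP].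
have BE : B \subset E by apply: subset_trans BC _; rewrite /color_class setIdE subsetIl.
have RE : A0 :|: B \subset E by rewrite subUset BE andbT /A0 setIdE subsetIl.
exists (A0 :|: B); split=> //.
  have AB : A0 :&: B = set0.
    apply/setP => f; rewrite !inE; apply/negP => /andP [+ /colB ca].
    by rewrite ca (negbTE a0t) andbF.
  by rewrite cardsU AB cards0 subn0 cB; lia.
move=> v; rewrite -(@size_takel j.+1 _ ord) //.
  apply: deg_le_colors (proper_coloringS RE pc) _ => f /setUP [|/colB ->].
    by rewrite inE tj1 mem_rcons inE => /andP [_ ->]; rewrite orbT.
  by rewrite tj1 mem_rcons mem_head.
move=> v; rewrite -size_drop; apply: deg_le_colors (proper_coloringS (subsetDl _ _) pc) _.
move=> f; rewrite !inE negb_or => /andP [/andP [fA0 _] fE] _.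
have : col f \in take j ord ++ drop j ord by rewrite cat_take_drop cE.
by rewrite mem_cat; move: fA0; rewrite fE /= => /negbTE ->.
Qed.

Lemma split_color_classes E col n k :
  proper_coloring E col -> (forall e, e \in E -> col e < n) -> k < #|E| ->
  exists (R : {set {set T}}) j, [/\ R \subset E, #|R| = k, j < n, j * #|E| <= n * k &
                  (forall v, deg R v <= j.+1) /\ (forall v, deg (E :\: R) v <= n - j)].
Proof.
move=> pc cn kE; pose s a := #|color_class E col a|.
pose ord := sort (fun a b => s b <= s a) (iota 0 n); set w := map s ord.
have pord : perm_eq ord (iota 0 n) by rewrite perm_sort.
have uord : uniq ord by rewrite (perm_uniq pord) iota_uniq.
have sord : size ord = n by rewrite (perm_size pord) size_iota.
have cE e : e \in E -> col e \in ord by move=> /cn; rewrite (perm_mem pord) mem_iota.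
have srt : sorted geq w by rewrite sorted_map; apply: sort_sorted => a b; apply: leq_total.
have Scard l : #|[set f in E | col f \in take l ord]| = sumn (take l w).
  by rewrite card_colors_in ?take_uniq // sumnE -map_take big_map.
have Sn : sumn w = #|E|.
  rewrite -(take_size w) -Scard size_map take_size; apply: eq_card => f.
  by rewrite !inE andb_idr // => /cE.
have := @sumn_take_bracket w k; rewrite Sn => /(_ kE) [j jn /andP [Sj k_lt]].
rewrite size_map in jn.
have [|R [RE cR] [degR degER]] := prefix_color_split pc uord cE jn (k := k).
  by rewrite !Scard Sj ltnW.
exists R, j; rewrite -sord; split => //.
have := sorted_prefix_sumn srt (j := j); rewrite size_map Sn => /(_ (ltnW jn)).
by move=> /leq_trans; apply; rewrite leq_mul2l Sj orbT.
Qed.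

End ColorClasses.

Section MinDegree.

Variable T : finType.
Implicit Types E R : {set {set T}}.

Lemma mindeg_le_deg E v : mindeg E <= deg E v.
Proof.
rewrite /mindeg unlock; have : v \in index_enum T by rewrite mem_index_enum.
elim: (index_enum T) => //= u s IH; rewrite inE => /orP [/eqP <-|vs].
  exact: geq_minl.
exact: leq_trans (geq_minr _ _) (IH vs).
Qed.

Lemma mindeg_le_card E : mindeg E <= #|T|.
Proof.
rewrite /mindeg unlock; elim: (index_enum T) => //= u s IH.
exact: leq_trans (geq_minr _ _) IH.
Qed.

Lemma mindeg_setD E R b :
  R \subset E -> (forall v, deg R v <= b) -> mindeg E - b <= mindeg (E :\: R).
Proof.
move=> RE degR; apply: (big_ind (fun y => mindeg E - b <= y)).
- exact: leq_trans (leq_subr _ _) (mindeg_le_card E).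
- by move=> y z ey ez; rewrite leq_min ey ez.
- move=> v _; have := mindeg_le_deg E v; rewrite (deg_setD v RE).
  by have := degR v; lia.
Qed.

End MinDegree.

Theorem lemma4p1 (T : finType) (E : {set {set T}}) (m : nat) :
  simple_graph E -> 0 < nedges E -> 0 < m -> m <= nedges E ->
  exists E' : {set {set T}},
    [/\ E' \subset E,
        nedges E' = m,
        ((maxdeg E')%:Z - (mindeg E')%:Z <= (maxdeg E)%:Z - (mindeg E)%:Z + 2)%R
      & ((maxdeg (E :\: E'))%:R <=
          ((maxdeg E).+1)%:R * (((nedges E - m)%:R) / (nedges E)%:R) + 1 :> rat)%R].
Proof.
move=> sE E_gt0 m_gt0 m_le.
have [col pc cn] : colorable E (maxdeg E).+1.
  by apply: vizing sE _ => v; rewrite ltnS; apply: leq_bigmax.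
have [|R [j [RE cardR jn avg [degR degER]]]] := split_color_classes (k := nedges E - m) pc cn.
  by rewrite -/(nedges E); lia.
exists (E :\: R); rewrite setDDr setDv set0U (setIidPr RE); split.
- exact: subsetDl.
- by rewrite /nedges cardsD (setIidPr RE) cardR -/(nedges E); lia.
- have maxE' : maxdeg (E :\: R) <= (maxdeg E).+1 - j by apply/bigmax_leqP.
  by have := mindeg_setD RE degR; lia.
- have maxR : maxdeg R <= j.+1 by apply/bigmax_leqP.
  apply: (@le_trans _ _ (j.+1%:R)%R); first by rewrite ler_nat.
  rewrite -addn1 natrD lerD2r mulrA ler_pdivlMr ?ltr0n // -!natrM ler_nat.
  exact: avg.
Qed.
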